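(* A filtered vector space $(V,\ell)$ satisfies the best approximation property if and only if $\ell(V\setminus\{0\})$ is a well-ordered subset of $\mathbb{R}$.
   Context: A filtered vector space over a field $\kappa$ is a pair $(V,\ell)$ with $V$ a $\kappa$-vector space and $\ell\colon V\to\mathbb{R}\cup\{-\infty\}$ such that $\ell(v)=-\infty$ iff $v=0$, $\ell(cv)=\ell(v)$ for $c\in\kappa\setminus\{0\}$, and $\ell(v+w)\le\max\{\ell(v),\ell(w)\}$. $(V,\ell)$ satisfies the best approximation property if for every proper subspace $W\subsetneq V$ and every $v\in V\setminus W$ there is $w_0\in W$ with $\ell(v-w_0)\le\ell(v-w)$ for all $w\in W$. *)

From HB Require Import structures.
From mathcomp Require Import all_boot all_order all_algebra.
From mathcomp Require Import boolp classical_sets reals constructive_ereal.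
Set Implicit Arguments. Unset Strict Implicit. Unset Printing Implicit Defensive.
Import Order.TTheory GRing.Theory Num.Theory.
Local Open Scope ring_scope.
Local Open Scope ereal_scope.
Local Open Scope classical_set_scope.

(* A filtration on a K-vector space V with values in R ∪ {-oo},
   modelled as a map into the extended reals that never takes the value +oo. *)
Definition is_filtration (R : realType) (K : fieldType) (V : lmodType K)
    (l : V -> \bar R) : Prop :=
  [/\ forall v, l v != +oo,
      forall v, l v = -oo <-> v = 0%R,
      forall (c : K) v, c != 0%R -> l (c *: v)%R = l v
    & forall v w, l (v + w)%R <= maxe (l v) (l w)].

Definition is_subspace (K : fieldType) (V : lmodType K) (W : set V) : Prop :=
  [/\ W 0%R, forall v w, W v -> W w -> W (v + w)%R
    & forall (c : K) v, W v -> W (c *: v)%R].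

Definition best_approximation_property (R : realType) (K : fieldType)
    (V : lmodType K) (l : V -> \bar R) : Prop :=
  forall W : set V, is_subspace W -> W <> setT ->
  forall v, ~ W v ->
  exists2 w0, W w0 & forall w, W w -> l (v - w0)%R <= l (v - w)%R.

Definition well_ordered_set (R : realType) (S : set R) : Prop :=
  forall A : set R, A `<=` S -> A !=set0 ->
  exists2 m, A m & forall a, A a -> (m <= a)%R.

Definition nonzero_values (R : realType) (K : fieldType) (V : lmodType K)
    (l : V -> \bar R) : set R :=
  [set r : R | exists2 v : V, v != 0%R & l v = r%:E].

From HB Require Import structures.
From mathcomp Require Import all_boot all_order all_algebra.
From mathcomp Require Import boolp classical_sets reals constructive_ereal.
Set Implicit Arguments. Unset Strict Implicit. Unset Printing Implicit Defensive.
Import Order.TTheory GRing.Theory Num.Theory.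
Local Open Scope ring_scope.
Local Open Scope ereal_scope.
Local Open Scope classical_set_scope.

(* If l(V \ {0}) is well ordered, a best approximation of v from W is any w0
   realising the least element of {l(v - w) | w in W}.
   Conversely, let A ⊆ l(V \ {0}) be nonempty, pick f b with l(f b) = b for b
   in A and some a0 in A.  In the subspace W of combinations Σ c_i f(b_i) with
   b_i in A and Σ c_i = 0, every difference f(a0) - w is a combination with
   coefficient sum 1, whose value is the largest b_i carrying a nonzero total
   coefficient, hence lies in A.  Since f(a0) - f(a) lies in W, the value
   l(f(a0) - w0) of a best approximation w0 is at most l(f a) = a for every a
   in A: it is the least element of A. *)

Lemma exists_seq_argmax (T : eqType) d (O : orderType d) (key : T -> O)
    (s : seq T) : s != [::] ->
  exists2 x, x \in s & {in s, forall y, (key y <= key x)%O}.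
Proof.
elim: s => [//|x s IH] _.
have [->|/IH[y ys ymax]] := eqVneq s [::].
  by exists x => [|y]; rewrite ?mem_seq1 // => /eqP->.
have [xy|yx] := leP (key x) (key y).
  by exists y => [|z]; rewrite inE ?ys ?orbT // => /orP[/eqP->|/ymax].
exists x => [|z]; first by rewrite mem_head.
by rewrite inE => /orP[/eqP->//|/ymax/le_trans]; apply; apply: ltW.
Qed.

Section Filtration.
Variables (R : realType) (K : fieldType) (V : lmodType K) (l : V -> \bar R).
Hypothesis hl : is_filtration l.

Lemma filtration_eqNy v : l v = -oo <-> v = 0%R.
Proof. by case: hl. Qed.

Lemma filtration0 : l 0%R = -oo.
Proof. exact/filtration_eqNy. Qed.

Lemma filtrationZ (c : K) v : c != 0%R -> l (c *: v)%R = l v.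
Proof. by case: hl => _ _ + _; apply. Qed.

Lemma filtrationN v : l (- v)%R = l v.
Proof. by rewrite -scaleN1r filtrationZ // oppr_eq0 oner_neq0. Qed.

Lemma filtrationD v w : l (v + w)%R <= maxe (l v) (l w).
Proof. by case: hl => _ _ _; apply. Qed.

Lemma filtrationD_ltr v w : l w < l v -> l (v + w)%R = l v.
Proof.
move=> lt_wv; apply/eqP; rewrite eq_le; apply/andP; split.
  by apply: le_trans (filtrationD _ _) _; rewrite ge_max lexx ltW.
have := filtrationD (v + w)%R (- w)%R; rewrite addrK filtrationN le_max.
by case/orP=> //; rewrite leNgt lt_wv.
Qed.

Lemma filtration_fin v : v != 0%R -> exists r, l v = r%:E.
Proof.
move=> v0; case lv: (l v) => [r| |]; first by exists r.
- by case: hl => /(_ v); rewrite lv.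
- by move: v0 => /eqP; case; apply/filtration_eqNy.
Qed.

Lemma best_approximation_of_well_ordered :
  well_ordered_set (nonzero_values l) -> best_approximation_property l.
Proof.
move=> wo W [W0 _ _] _ v Wv.
have sub_neq0 w : W w -> (v - w)%R != 0%R.
  by move=> Ww; apply: contraPneq Wv => /eqP; rewrite subr_eq0 => /eqP->.
pose B := [set r : R | exists2 w, W w & l (v - w)%R = r%:E].
have BS : B `<=` nonzero_values l.
  by move=> r [w Ww lw]; exists (v - w)%R => //; apply: sub_neq0.
have [|m [w0 Ww0 lw0] m_min] := wo B BS.
  by have [r lr] := filtration_fin (sub_neq0 _ W0); exists r, 0%R.
exists w0 => // w Ww; have [r lr] := filtration_fin (sub_neq0 _ Ww).
by rewrite lw0 lr lee_fin; apply: m_min; exists w.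
Qed.

Section Combinations.
Variables (f : R -> V) (A : set R).
Hypothesis lf : forall b, A b -> l (f b) = b%:E.

Definition comb (p : seq (R * K)) := (\sum_(q <- p) q.2 *: f q.1)%R.
Definition coef_sum (p : seq (R * K)) := (\sum_(q <- p) q.2)%R.

Lemma l_comb_lt (P : pred (R * K)) (M : R) (p : seq (R * K)) :
  {in p, forall q, A q.1} -> {in p, forall q, P q -> (q.1 < M)%R} ->
  l (\sum_(q <- p | P q) q.2 *: f q.1)%R < M%:E.
Proof.
elim: p => [|q p IH] Ap ltM; first by rewrite big_nil filtration0 ltNyr.
have {}IH := IH (fun q' q'p => Ap q' (mem_behead (s := q :: p) q'p))
                (fun q' q'p => ltM q' (mem_behead (s := q :: p) q'p)).
rewrite big_cons; case: ifP => // Pq.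
apply: le_lt_trans (filtrationD _ _) _; rewrite gt_max IH andbT.
have [->|c0] := eqVneq q.2 0%R; first by rewrite scale0r filtration0 ltNyr.
by rewrite filtrationZ // lf ?lte_fin; [apply: ltM | apply: Ap]; rewrite ?mem_head.
Qed.

Lemma l_comb_mem (p : seq (R * K)) :
  {in p, forall q, A q.1} -> coef_sum p != 0%R ->
  exists2 b, A b & l (comb p) = b%:E.
Proof.
move: {2}(size p) (leqnn (size p)) => n; elim: n p => [|n IH] p.
  by rewrite leqn0 => /nilP-> _; rewrite /coef_sum big_nil eqxx.
move=> sz_p Ap sum_p.
have p0 : p != [::] by apply: contraNneq sum_p => ->; rewrite /coef_sum big_nil.
have [qM qMp qM_max] := exists_seq_argmax (@fst R K) p0.
pose M := qM.1; pose cM := (\sum_(q <- p | q.1 == M) q.2)%R.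
pose p' := [seq q <- p | q.1 != M].
have comb_p : comb p = (cM *: f M + comb p')%R.
  rewrite /comb big_filter (bigID (fun q => q.1 == M)) /= scaler_suml.
  by congr (_ + _)%R; apply: eq_bigr => q /eqP->.
have sum_p' : coef_sum p = (cM + coef_sum p')%R.
  by rewrite /coef_sum big_filter (bigID (fun q => q.1 == M)).
have [cM0|cM0] := eqVneq cM 0%R; last first.
  have lM : l (cM *: f M)%R = M%:E by rewrite filtrationZ // lf //; apply: Ap.
  exists M; first exact: Ap.
  rewrite comb_p filtrationD_ltr lM // /comb big_filter.
  by apply: l_comb_lt => // q qp /= neqM; rewrite lt_neqAle neqM qM_max.
have sz_p' : (size p' <= n)%N.
  rewrite size_filter -ltnS (leq_trans _ sz_p) //.
  rewrite -(count_predC (fun q : R * K => q.1 != M)) -addn1 leq_add2l.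
  by rewrite -has_count; apply/hasP; exists qM; rewrite //= negbK.
have Ap' : {in p', forall q, A q.1}.
  by move=> q; rewrite mem_filter => /andP[_ /Ap].
rewrite comb_p cM0 scale0r add0r; apply: IH => //.
by move: sum_p; rewrite sum_p' cM0 add0r.
Qed.

Definition zero_sum_combs : set V :=
  [set comb p | p in [set p | {in p, forall q, A q.1} /\ coef_sum p = 0%R]].

Lemma zero_sum_combs_subspace : is_subspace zero_sum_combs.
Proof.
rewrite /zero_sum_combs /comb /coef_sum; split.
- by exists [::]; [split|]; rewrite ?big_nil.
- move=> _ _ [p1 [A1 S1] <-] [p2 [A2 S2] <-]; exists (p1 ++ p2).
    split=> [q|]; first by rewrite mem_cat => /orP[/A1|/A2].
    by rewrite big_cat S1 S2; exact: addr0.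
  by rewrite big_cat.
- move=> c _ [p [Ap Sp] <-]; exists [seq (q.1, c * q.2)%R | q <- p].
    split=> [_ /mapP[q /Ap Aq ->] //|].
    by rewrite big_map -mulr_sumr Sp mulr0.
  rewrite big_map scaler_sumr.
  by apply: eq_bigr => q _ /=; rewrite scalerA.
Qed.

Lemma l_sub_zero_sum_comb a0 w : A a0 -> zero_sum_combs w ->
  exists2 b, A b & l (f a0 - w)%R = b%:E.
Proof.
move=> Aa0 [p [Ap Sp] <-].
pose p' := (a0, 1%R) :: [seq (q.1, - q.2)%R | q <- p].
have -> : (f a0 - comb p)%R = comb p'.
  rewrite /comb big_cons big_map scale1r -sumrN.
  by congr (_ + _)%R; apply: eq_bigr => q _; rewrite scaleNr.
apply: l_comb_mem => [q|].
  by rewrite inE => /orP[/eqP-> //|/mapP[q' /Ap ? ->]].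
rewrite /coef_sum big_cons big_map sumrN -/(coef_sum p) Sp oppr0 addr0.
exact: oner_neq0.
Qed.

End Combinations.

Lemma well_ordered_of_best_approximation :
  best_approximation_property l -> well_ordered_set (nonzero_values l).
Proof.
move=> bap A AS [a0 Aa0].
have [f lf] : {f : R -> V & forall b, A b -> l (f b) = b%:E}.
  apply: (choice (P := fun b v => A b -> l v = b%:E)) => b.
  have [/AS[v _ lv]|nAb] := pselect (A b); first by exists v.
  by exists 0%R => /nAb.
pose W := zero_sum_combs f A.
have Wf a : A a -> W (f a0 - f a)%R.
  move=> Aa; exists [:: (a0, 1%R); (a, -1)%R]; last first.
    by rewrite /comb !big_cons big_nil addr0 scale1r scaleN1r.
  split=> [q|]; first by rewrite !inE => /orP[]/eqP->.
  by rewrite /coef_sum !big_cons big_nil addr0 subrr.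
have Wv : ~ W (f a0).
  case/(l_sub_zero_sum_comb lf Aa0) => b _.
  by rewrite subrr filtration0.
have WT : W <> setT by move=> WT; apply: Wv; rewrite WT.
have [w0 Ww0 w0_best] := bap W (zero_sum_combs_subspace f A) WT (f a0) Wv.
have [b Ab lb] := l_sub_zero_sum_comb lf Aa0 Ww0.
exists b => // a Aa; have := w0_best _ (Wf a Aa).
by rewrite subKr lb lf // lee_fin.
Qed.

End Filtration.

Theorem proposition3p5 (R : realType) (K : fieldType) (V : lmodType K)
    (l : V -> \bar R) :
  is_filtration l ->
  (best_approximation_property l <-> well_ordered_set (nonzero_values l)).
Proof.
move=> hl; split.
- exact: well_ordered_of_best_approximation.
- exact: best_approximation_of_well_ordered.
Qed.
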